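(* Let $1/2<\delta<1$, let $P\subset\mathbb{R}^1$ be a finite point set containing the source $s$ located at $0$, and let $I\subset\mathbb{R}^1$ be an interval of length $\Delta_1$ at distance $\Delta_2$ from the source, that is, $I=[\Delta_2,\Delta_2+\Delta_1]$ or $I=[-\Delta_1-\Delta_2,-\Delta_2]$, for some $\Delta_2>0$. Let $P_{\mathrm{cheap}}(I)$ be the set of all cheap points of $P$ that are in $I$ and whose successor lies in $I$ as well. Then $\sum_{p\in P_{\mathrm{cheap}}(I)}\rho_{\mathrm{st}}(p)^2\le\delta(\Delta_1+\Delta_2)\Delta_1$.
   Context: Points of $P$ left of $s$ are $\ell_1,\ell_2,\dots$ and right of $s$ are $r_1,r_2,\dots$, numbered by increasing distance from $s$. The successor $\mathrm{suc}(p)$ of $r_i$ is $r_{i+1}$ and of $\ell_i$ is $\ell_{i+1}$; $s$ has successors $r_1,\ell_1$; the farthest point on each side (extreme) has no successor ($\mathrm{nil}$). The standard range $\rho_{\mathrm{st}}(p)$ of $p\ne s$ is $|p\,\mathrm{suc}(p)|$, or $0$ if $p$ is extreme. A point $p\ne s$ is expensive if $\mathrm{suc}(p)\ne\mathrm{nil}$ and $|p\,\mathrm{suc}(p)|>\delta\cdot|s\,\mathrm{suc}(p)|$, and cheap otherwise; $s$ is always expensive. *)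

From HB Require Import structures.
From mathcomp Require Import all_boot all_order all_algebra.
Set Implicit Arguments. Unset Strict Implicit. Unset Printing Implicit Defensive.
Import Order.TTheory GRing.Theory Num.Theory.
Local Open Scope ring_scope.

Section Defs.
Variable R : realFieldType.

(* Successor of a point p <> s (s is at 0) in the finite point set P:
   for p > 0 the nearest point of P to the right of p (r_i -> r_(i+1)),
   for p < 0 the nearest point of P to the left of p (l_i -> l_(i+1));
   None (nil) if p is extreme on its side.  The source s = 0 (which has two
   successors) is never passed to [suc] in a meaningful way: all uses below
   exclude p = 0 explicitly. *)
Definition suc (P : seq R) (p : R) : option R :=
  if 0 < p then
    match [seq q <- P | p < q] with
    | [::] => None
    | q :: C => Some (foldr Num.min q C)
    end
  else
    match [seq q <- P | q < p] with
    | [::] => None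
    | q :: C => Some (foldr Num.max q C)
    end.

Definition rho_st (P : seq R) (p : R) : R :=
  match suc P p with Some q => `|p - q| | None => 0 end.

Definition expensive (delta : R) (P : seq R) (p : R) : bool :=
  (p == 0) ||
  match suc P p with Some q => delta * `|0 - q| < `|p - q| | None => false end.

Definition cheap (delta : R) (P : seq R) (p : R) : bool := ~~ expensive delta P p.

Definition in_itv (lo hi x : R) : bool := (lo <= x) && (x <= hi).

Definition in_Pcheap (delta : R) (P : seq R) (lo hi p : R) : bool :=
  [&& cheap delta P p, in_itv lo hi p &
      match suc P p with Some q => in_itv lo hi q | None => false end].

End Defs.

From Pilot Require Import Defs.
From HB Require Import structures.
From mathcomp Require Import all_boot all_order all_algebra.
From mathcomp Require Import lra.
Import Order.TTheory GRing.Theory Num.Theory.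
Local Open Scope ring_scope.

(* By the symmetry x |-> -x we may assume that I = [lo, hi] lies to the right
   of the source.  A cheap point p of P_cheap(I) with successor q satisfies
   q - p <= delta * q <= delta * hi, so rho_st(p)^2 <= delta * hi * (q - p).
   Since q is the point of P nearest to the right of p, the intervals [p, q]
   have disjoint interiors and lie in I, so their lengths sum to at most
   hi - lo. *)

Lemma sum_interval_lengths_le {R : realDomainType} {T : eqType}
    (a b : T -> R) (s : seq T) (lo hi : R) :
  lo <= hi -> pairwise (fun x y => b x <= a y) s ->
  (forall x, x \in s -> lo <= a x /\ b x <= hi) ->
  \sum_(x <- s) (b x - a x) <= hi - lo.
Proof.
elim: s lo => [|x s IH] lo lo_hi; first by rewrite big_nil subr_ge0.
rewrite pairwise_cons big_cons => /andP[/allP bx_le pw] in_lo_hi.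
have [lo_ax bx_hi] := in_lo_hi x (mem_head x s).
have : \sum_(y <- s) (b y - a y) <= hi - b x.
  apply: IH bx_hi pw _ => y ys; split; first exact: bx_le.
  by case: (in_lo_hi y) => //; rewrite inE ys orbT.
lra.
Qed.

Lemma foldr_morph {T : Type} {f : T -> T} {op op' : T -> T -> T} q C :
  {morph f : x y / op x y >-> op' x y} ->
  foldr op' (f q) (map f C) = f (foldr op q C).
Proof. by move=> fM; elim: C => //= c C ->; rewrite fM. Qed.

Section Successor.
Context {R : realFieldType}.
Implicit Types (P : seq R) (p q lo hi delta : R).

Lemma foldr_min_mem q C : foldr Num.min q C \in q :: C.
Proof.
elim: C => [|c C IH] /=; first exact: mem_head.
case: (leP c (foldr Num.min q C)) => _; first by rewrite !inE eqxx orbT.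
by move: IH; rewrite !inE => /orP[->|->]; rewrite ?orbT.
Qed.

Lemma foldr_min_le q C y : y \in q :: C -> foldr Num.min q C <= y.
Proof.
elim: C => [|c C IH] /=; first by rewrite inE => /eqP ->.
rewrite ge_min !inE => /or3P[y_q|/eqP->|y_C]; last 2 first.
- by rewrite lexx.
- by rewrite IH ?orbT // inE y_C orbT.
by rewrite IH ?orbT // inE y_q.
Qed.

Lemma suc_pos {P p q} : 0 < p -> suc P p = Some q ->
  p < q /\ forall y, y \in P -> p < y -> q <= y.
Proof.
rewrite /suc => -> /=; case E: [seq _ <- P | _] => [//|x C] [<-].
have memE z : (z \in x :: C) = (z \in P) && (p < z).
  by rewrite -E mem_filter andbC.
split; first by move: (foldr_min_mem x C); rewrite memE => /andP[].
by move=> y yP py; apply: foldr_min_le; rewrite memE yP.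
Qed.

Lemma suc_opp P p : p != 0 -> suc (map -%R P) (- p) = omap -%R (suc P p).
Proof.
rewrite /suc oppr_gt0; case: ltgtP => // [p_lt0|p_gt0] _;
  rewrite filter_map; under eq_filter do rewrite /= ltrN2.
- by case: [seq _ <- P | _] => //= x C; rewrite (foldr_morph _ _ (@oppr_max R)).
- by case: [seq _ <- P | _] => //= x C; rewrite (foldr_morph _ _ (@oppr_min R)).
Qed.

Lemma in_Pcheap_neq0 delta P lo hi p : in_Pcheap delta P lo hi p -> p != 0.
Proof. by rewrite /in_Pcheap /cheap /expensive negb_or => /andP[/andP[]]. Qed.

Lemma in_itv_opp lo hi x :
  Defs.in_itv (- hi) (- lo) (- x) = Defs.in_itv lo hi x.
Proof. by rewrite /Defs.in_itv !lerN2 andbC. Qed.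

Lemma in_Pcheap_opp delta P lo hi p :
  in_Pcheap delta (map -%R P) (- hi) (- lo) (- p) = in_Pcheap delta P lo hi p.
Proof.
have [->|p_neq0] := eqVneq p 0.
  by rewrite oppr0 /in_Pcheap /cheap /expensive eqxx.
rewrite /in_Pcheap /cheap /expensive oppr_eq0 suc_opp // in_itv_opp.
case: suc => [q|] /=; last by rewrite !andbF.
by rewrite -opprD !sub0r !normrN in_itv_opp.
Qed.

Lemma rho_st_opp P p : p != 0 -> rho_st (map -%R P) (- p) = rho_st P p.
Proof.
move=> p_neq0; rewrite /rho_st suc_opp //.
by case: suc => //= q; rewrite -opprD normrN.
Qed.

Lemma sum_Pcheap_opp (F : R -> R) delta P lo hi :
  \sum_(p <- map -%R P | in_Pcheap delta (map -%R P) (- hi) (- lo) p)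
     F (rho_st (map -%R P) p)
  = \sum_(p <- P | in_Pcheap delta P lo hi p) F (rho_st P p).
Proof.
rewrite big_map; under eq_bigl do rewrite in_Pcheap_opp.
by apply: eq_bigr => p /in_Pcheap_neq0 p_neq0; rewrite rho_st_opp.
Qed.

Lemma in_Pcheap_pos {delta P lo hi p} : 0 <= delta -> 0 < lo ->
  in_Pcheap delta P lo hi p ->
  exists2 q, suc P p = Some q &
    [/\ lo <= p, q <= hi & rho_st P p ^+ 2 <= delta * hi * (q - p)].
Proof.
move=> delta_ge0 lo_gt0.
rewrite /in_Pcheap /cheap /expensive /rho_st /Defs.in_itv.
case E: (suc P p) => [q|]; last by rewrite !andbF.
rewrite negb_or -leNgt sub0r normrN.
move=> /and3P[/andP[_ cheap_p] /andP[lo_p _] /andP[_ q_hi]].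
have [p_q _] := suc_pos (lt_le_trans lo_gt0 lo_p) E.
exists q => //; split => //.
have q_gt0 : 0 < q by rewrite (lt_trans _ p_q) // (lt_le_trans lo_gt0).
rewrite distrC gtr0_norm ?subr_gt0 // gtr0_norm // in cheap_p *.
rewrite expr2 ler_wpM2r ?subr_ge0 ?(ltW p_q) //.
by rewrite (le_trans cheap_p) // ler_wpM2l.
Qed.

Lemma sum_Pcheap_sqr_rho_st_le delta P lo hi :
  0 <= delta -> uniq P -> 0 < lo <= hi ->
  \sum_(p <- P | in_Pcheap delta P lo hi p) rho_st P p ^+ 2
    <= delta * hi * (hi - lo).
Proof.
move=> delta_ge0 uP /andP[lo_gt0 lo_hi]; rewrite -big_filter.
set s := [seq p <- P | _].
pose g p := odflt p (suc P p).
have s_cheap p : p \in s ->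
    [/\ lo <= p, g p <= hi & rho_st P p ^+ 2 <= delta * hi * (g p - p)].
  rewrite mem_filter => /andP[/(in_Pcheap_pos delta_ge0 lo_gt0)[q E] + _].
  by rewrite /g E.
have g_le x y : x \in s -> y \in s -> x < y -> g x <= y.
  rewrite !mem_filter => /andP[/(in_Pcheap_pos delta_ge0 lo_gt0)[q E] + _].
  move=> [lo_x _ _] /andP[_ yP] xy; rewrite /g E /=.
  by have [_ ->] := suc_pos (lt_le_trans lo_gt0 lo_x) E.
apply: le_trans (_ : \sum_(p <- s) delta * hi * (g p - p) <= _).
  by rewrite big_seq [leRHS]big_seq; apply: ler_sum => p /s_cheap[].
have hi_ge0 : 0 <= hi := le_trans (ltW lo_gt0) lo_hi.
rewrite -mulr_sumr ler_wpM2l ?mulr_ge0 //.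
rewrite -(perm_big _ (permEl (perm_sort <=%R s))).
apply: (sum_interval_lengths_le id g) => // [|x]; last first.
  by rewrite mem_sort => /s_cheap[].
have : pairwise <%R (sort <=%R s).
  by rewrite -lt_sorted_pairwise sort_lt_sorted filter_uniq.
apply: (sub_in_pairwise (P := fun x => x \in s)) => [x y xs ys|].
  exact: g_le.
by apply/allP => x; rewrite mem_sort.
Qed.

End Successor.

Theorem lemma11 (R : realFieldType) (delta : R) (P : seq R)
    (Delta1 Delta2 lo hi : R) :
  2^-1 < delta -> delta < 1 ->
  uniq P -> 0 \in P ->
  0 <= Delta1 -> 0 < Delta2 ->
  ((lo = Delta2 /\ hi = Delta2 + Delta1) \/
   (lo = - Delta1 - Delta2 /\ hi = - Delta2)) ->
  \sum_(p <- P | in_Pcheap delta P lo hi p) rho_st P p ^+ 2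
    <= delta * (Delta1 + Delta2) * Delta1.
Proof.
move=> half_lt_delta _ uP _ Delta1_ge0 Delta2_gt0 I_def.
have delta_ge0 : 0 <= delta.
  by rewrite (le_trans _ (ltW half_lt_delta)) // invr_ge0 ler0n.
have I_pos : 0 < Delta2 <= Delta1 + Delta2 by rewrite Delta2_gt0 lerDr.
have I_pos_bound Q (uQ : uniq Q) :=
  sum_Pcheap_sqr_rho_st_le delta Q _ _ delta_ge0 uQ I_pos.
rewrite addrK in I_pos_bound.
case: I_def => [[-> ->]|[-> ->]].
  by rewrite [Delta2 + _]addrC; apply: I_pos_bound.
rewrite -(sum_Pcheap_opp (fun r => r ^+ 2)) opprD !opprK.
by apply: I_pos_bound; rewrite map_inj_uniq //; apply: oppr_inj.
Qed.
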